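(* For $n\ge 1$ and $0<z<1/n$ let $q_n(z) = \sum_{\pi\in S_n} z^{t(\pi)}$. Then \[ q_n(z) = O(\sqrt{n})\,\frac{e^{-n}}{(1-zn)^{1/z}}, \] i.e. there is an absolute constant $C$ such that $q_n(z) \le C\sqrt{n}\,e^{-n}(1-zn)^{-1/z}$ for all $n\ge1$ and $0<z<1/n$.
   Context: For $\pi\in S_n$, $t(\pi)$ is the minimum number of transpositions whose product is $\pi$; equivalently $t(\pi)=s(\pi)-c(\pi)$ where $s(\pi)$ is the number of points moved by $\pi$ and $c(\pi)$ the number of its cycles of length at least 2. *)

From HB Require Import structures.
From mathcomp Require Import all_boot all_order all_algebra all_fingroup.
From mathcomp Require Import all_classical all_reals all_analysis.
Set Implicit Arguments. Unset Strict Implicit. Unset Printing Implicit Defensive.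
Import Order.TTheory GRing.Theory Num.Theory.

Definition moved_pts (n : nat) (pi : 'S_n) : nat := #|[set x | pi x != x]|.

Definition ncycles2 (n : nat) (pi : 'S_n) : nat :=
  #|[set C in porbits pi | 1 < #|C|]|.

(* t(pi) = s(pi) - c(pi): minimum number of transpositions whose product is pi *)
Definition tnum (n : nat) (pi : 'S_n) : nat := moved_pts pi - ncycles2 pi.

Local Open Scope ring_scope.

Definition qn {R : realType} (n : nat) (z : R) : R := \sum_(pi : 'S_n) z ^+ tnum pi.

From HB Require Import structures.
From mathcomp Require Import all_boot all_order all_algebra all_fingroup.
From mathcomp Require Import all_classical all_reals all_analysis.
From mathcomp Require Import ring lra.
Import Order.TTheory GRing.Theory Num.Theory.
Set Implicit Arguments. Unset Strict Implicit. Unset Printing Implicit Defensive.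

(* Counting fixed points as cycles, t(pi) = n - #cycles(pi), so q_n(z) is the cycle
   generating function of S_n, which factors as prod_(k < n) (1 + k z): extending
   a permutation of A to a |: A by sending a to j multiplies it by the transposition
   (a j), which merges a into the cycle of j unless j = a.  Then
   1 + x <= exp(1/(1 - x) - 1), and comparing sum_(k < n) 1/(1 - k z) with the
   integral of 1/(1 - z x) over [0, n] gives q_n(z) <= e^-n (1 - z n)^(-1/z);
   so C = 1 works, as sqrt n >= 1. *)

Section PermCycles.
Variable T : finType.
Implicit Types (s : {perm T}) (A : {set T}) (x a j : T).

Lemma porbit_fixed s x : s x = x -> porbit s x = [set x].
Proof.
move=> sx; apply/setP => y; rewrite inE; apply/porbitP/eqP => [[i ->]|->].
  by rewrite permX_fix.
by exists 0%N; rewrite expg0 perm1.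
Qed.

Lemma card_porbit_gt1 s x : (1 < #|porbit s x|)%N = (s x != x).
Proof.
have [sx|sx] := eqVneq (s x) x; first by rewrite porbit_fixed // cards1.
have sub : [set x; s x] \subset porbit s x.
  apply/fintype.subsetP => y; rewrite !inE => /orP[] /eqP ->.
    exact: porbit_id.
  by rewrite -[s x]/((s ^+ 1)%g x) mem_porbit.
by apply: leq_trans (subset_leq_card sub); rewrite cards2 eq_sym sx.
Qed.

Lemma card_porbit_pred s (P : pred {set T}) :
  #|[set x | P (porbit s x)]| = (\sum_(C in porbits s | P C) #|C|)%N.
Proof.
rewrite -sum1_card (partition_big (porbit s) (fun C => (C \in porbits s) && P C)) /=.
  apply: eq_bigr => _ /andP[/imsetP[y _ ->] Py].
  rewrite -sum1_card; apply: eq_bigl => x; rewrite inE -eq_porbit_mem.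
  by case: eqVneq => [->|]; rewrite ?Py ?andbF.
by move=> x; rewrite inE => Px; rewrite imset_f.
Qed.

Lemma card_sub_porbits s :
  (#|T| - #|porbits s| = \sum_(C in porbits s) (#|C| - 1))%N.
Proof.
rewrite sumnB => [|C /imsetP[x _ ->]]; last by rewrite lt0n card_porbit_neq0.
rewrite sum1_card; congr (_ - _)%N.
rewrite -cardsT (_ : [set: T] = [set x | predT (porbit s x)]) ?card_porbit_pred.
  by apply: eq_bigl => C; rewrite andbT.
by apply/setP => x; rewrite !inE.
Qed.

Lemma tnum_porbits s :
  (#|[set x | s x != x]| - #|[set C in porbits s | 1 < #|C|]| = #|T| - #|porbits s|)%N.
Proof.
rewrite card_sub_porbits (bigID (fun C : {set T} => 1 < #|C|)%N) /=.
rewrite [X in (_ + X)%N]big1; last first.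
  by move=> C /andP[_]; rewrite -leqNgt => le1; apply/eqP; rewrite subn_eq0.
rewrite addn0 sumnB => [|C /andP[/imsetP[x _ ->] _]].
  rewrite sum1_card -card_porbit_pred; congr (_ - _)%N.
    by apply: eq_card => x; rewrite !inE card_porbit_gt1.
  by apply: eq_card => C; rewrite inE.
by rewrite lt0n card_porbit_neq0.
Qed.

Lemma card_porbits1 : #|porbits (1 : {perm T})| = #|T|.
Proof.
apply: card_in_imset => x y _ _ /eqP; rewrite eq_porbit_mem.
by rewrite porbit_fixed ?perm1 // inE => /eqP.
Qed.

(* The library's porbits_mul_tperm multiplies on the left; we pass to inverses. *)
Lemma card_porbits_mul_tperm s a j : s a = a ->
  (#|porbits (s * tperm a j)%g| + (a != j) = #|porbits s|)%N.
Proof.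
move=> sa; have sVa : (s^-1)%g a = a by rewrite -{1}sa perm.permK.
have := porbits_mul_tperm (s^-1)%g a j.
rewrite /= porbitsV -(porbitsV (tperm a j * s^-1)%g) invMg invgK tpermV.
rewrite porbit_sym porbit_fixed // inE eq_sym => merge.
by apply/eqP; rewrite -(eqn_add2r (a != j)) -addnA addnn merge.
Qed.

Lemma perm_onU1_mul_tperm A a j s : a \notin A -> j \in a |: A ->
  perm_on (a |: A) (s * tperm a j)%g && ((s * tperm a j)%g a == j) = perm_on A s.
Proof.
move=> aA jA.
have tA : perm_on (a |: A) (tperm a j).
  apply: fintype.subset_trans (tperm_on a j) _.
  by apply/fintype.subsetP => k /set2P[] ->; rewrite ?setU11.
have -> : ((s * tperm a j)%g a == j) = (s a == a).
  by rewrite permM -{2}(tpermL a j) (inj_eq perm_inj).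
apply/andP/idP => [[sjA /eqP sa]|sA].
  have sA : perm_on (a |: A) s by have := perm_onM sjA tA; rewrite -mulgA tperm2 mulg1.
  apply/fintype.subsetP => k sk; have := fintype.subsetP sA k sk.
  by case/setU1P => // ka; move: sk; rewrite inE ka sa eqxx.
split; last by rewrite (out_perm sA aA).
by apply: perm_onM tA; apply: fintype.subset_trans sA (finset.subsetUr _ _).
Qed.

End PermCycles.

Local Open Scope ring_scope.

Section TranspositionSum.
Variables (T : finType) (R : comNzRingType) (z : R).

(* The exponent is t(s), by tnum_porbits. *)
Definition tsum (A : {set T}) : R :=
  \sum_(s : {perm T} | perm_on A s) z ^+ (#|T| - #|porbits s|).

Lemma tsum0 : tsum finset.set0 = 1.
Proof.
rewrite /tsum (big_pred1 1%g) => [|s]; first by rewrite card_porbits1 subnn expr0.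
apply/idP/eqP => [s0|->]; last exact: perm_on1.
by apply: perm_on_id s0 _; rewrite cards0.
Qed.

(* s |-> s * tperm a j maps the permutations supported on A bijectively onto
   those supported on a |: A that send a to j. *)
Lemma tsumU1 (A : {set T}) a : a \notin A ->
  tsum (a |: A) = (1 + #|A|%:R * z) * tsum A.
Proof.
move=> aA; rewrite /tsum (partition_big (fun s : {perm T} => s a) [in a |: A]) /=; last first.
  by move=> s sA; rewrite perm_closed // setU11.
have fiber j : j \in a |: A ->
    \sum_(s | perm_on (a |: A) s && (s a == j)) z ^+ (#|T| - #|porbits s|)
    = z ^+ (a != j) * tsum A.
  move=> jA; rewrite (reindex_inj (mulIg (tperm a j))) /= /tsum mulr_sumr.
  rewrite (eq_bigl (perm_on A)) => [|s]; last exact: perm_onU1_mul_tperm.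
  apply: eq_bigr => s sA; rewrite -exprD; congr (_ ^+ _).
  have : (#|porbits s| <= #|T|)%N := leq_imset_card _ _.
  rewrite -(card_porbits_mul_tperm j (out_perm sA aA)) => le_T.
  by rewrite subnDA subnKC // leq_subRL // (leq_trans (leq_addr _ _) le_T).
rewrite (eq_bigr _ fiber) -mulr_suml big_setU1 //= eqxx expr0; congr ((_ + _) * _).
rewrite (eq_bigr (fun _ => z)) ?sumr_const ?mulr_natl // => j jA.
by have /negPf-> : a != j by apply: contraNneq aA => ->.
Qed.

Lemma tsumE (A : {set T}) : tsum A = \prod_(k < #|A|) (1 + k%:R * z).
Proof.
move cardA : #|A| => n; elim: n A cardA => [|n IH] A cardA.
  by rewrite (cards0_eq cardA) tsum0 big_ord0.
have /card_gt0P[a Aa] : (0 < #|A|)%N by rewrite cardA.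
have cardAa : #|A :\ a| = n by move: cardA; rewrite (cardsD1 a A) Aa => -[].
by rewrite -(finset.setD1K Aa) tsumU1 ?setD11 // IH // cardAa big_ord_recr /= mulrC.
Qed.

End TranspositionSum.

Lemma tnumE n (pi : 'S_n) : tnum pi = (n - #|porbits pi|)%N.
Proof. by rewrite /tnum /moved_pts /ncycles2 tnum_porbits card_ord. Qed.

Lemma qnE (R : realType) n (z : R) : qn n z = \prod_(k < n) (1 + k%:R * z).
Proof.
have := tsumE z [set: 'I_n]; rewrite cardsT card_ord => <-; rewrite /qn /tsum.
apply: eq_big => [pi|pi _]; last by rewrite tnumE card_ord.
by apply/esym/fintype.subsetP => x; rewrite inE.
Qed.

Section LogBounds.
Variable R : realType.

Lemma expR_invB_ge1Dx (x : R) : x < 1 -> 1 + x <= expR ((1 - x)^-1 - 1).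
Proof.
move=> x1; have x1' : 1 - x != 0 by rewrite subr_eq0 gt_eqF.
apply: le_trans (expR_ge1Dx x) _; rewrite ler_expR -subr_ge0.
have -> : (1 - x)^-1 - 1 - x = x ^+ 2 / (1 - x) by field.
by rewrite divr_ge0 ?sqr_ge0 // subr_ge0 ltW.
Qed.

Lemma divr_le_lnB (b y : R) : 0 < y < b -> y / b <= ln b - ln (b - y).
Proof.
case/andP=> y0 yb; have b0 : 0 < b := lt_trans y0 yb.
have yb1 : y / b < 1 by rewrite ltr_pdivrMr // mul1r.
have -> : b - y = b * (1 + - (y / b)) by field; rewrite gt_eqF.
rewrite lnM ?posrE ?subr_gt0 //.
by have := @le_ln1Dx _ (- (y / b)); rewrite ltrN2 => /(_ yb1); lra.
Qed.

Lemma sum_inv_le_ln (z : R) n : 0 < z -> z * n%:R < 1 ->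
  \sum_(k < n) (1 - k%:R * z)^-1 <= - ln (1 - z * n%:R) / z.
Proof.
move=> z0 zn.
pose g k := ln (1 - k%:R * z).
have step k : (k < n)%N -> (1 - k%:R * z)^-1 <= (g k - g k.+1) / z.
  move=> kn; have kz : k.+1%:R * z <= z * n%:R by rewrite mulrC ler_pM2l // ler_nat.
  rewrite ler_pdivlMr // mulrC /g -natr1 mulrDl mul1r opprD addrA.
  by apply: divr_le_lnB; move: kz zn; rewrite z0 -natr1 mulrDl mul1r; lra.
apply: le_trans (_ : \sum_(k < n) (g k - g k.+1) / z <= _).
  by apply: ler_sum => k _; apply: step.
rewrite -mulr_suml -(big_mkord xpredT (fun k => g k - g k.+1)).
rewrite (eq_bigr (fun k => - (g k.+1 - g k))) => [|k _]; last by rewrite opprB.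
by rewrite sumrN telescope_sumr // opprB /g mul0r subr0 ln1 sub0r (mulrC n%:R).
Qed.

Lemma prod_1Dkz_le (z : R) n : 0 < z -> z * n%:R < 1 ->
  \prod_(k < n) (1 + k%:R * z) <= expR (- n%:R) * powR (1 - z * n%:R) (- z^-1).
Proof.
move=> z0 zn.
have kz_lt1 (k : 'I_n) : k%:R * z < 1.
  by apply: le_lt_trans zn; rewrite mulrC ler_pM2l // ler_nat ltnW.
apply: le_trans (_ : \prod_(k < n) expR ((1 - k%:R * z)^-1 - 1) <= _).
  apply: ler_prod => k _; rewrite expR_invB_ge1Dx // andbT.
  by rewrite addr_ge0 // mulr_ge0 // ltW.
rewrite -expR_sum /powR gt_eqF ?subr_gt0 // -expRD ler_expR.
rewrite sumrB sumr_const card_ord.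
by have := sum_inv_le_ln z0 zn; rewrite mulNr mulrC; lra.
Qed.

End LogBounds.

Theorem lemma4 (R : realType) :
  exists C : R, forall (n : nat) (z : R),
    (1 <= n)%N -> 0 < z -> z < n%:R^-1 ->
    qn n z <= C * Num.sqrt n%:R * expR (- n%:R) * powR (1 - z * n%:R) (- z^-1).
Proof.
exists 1 => n z n1 z0 zn.
have zn1 : z * n%:R < 1 by rewrite -ltr_pdivlMr ?ltr0n // div1r.
rewrite qnE mul1r -mulrA; apply: le_trans (prod_1Dkz_le z0 zn1) _.
apply: ler_peMl; first by rewrite mulr_ge0 ?expR_ge0 ?powR_ge0.
have : (1 : R) <= n%:R by rewrite ler1n.
by rewrite -(ler_sqrt 1) ?ler0n // sqrtr1.
Qed.
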